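(* (1) Let $(X,* )$ be a semi-group satisfying $a*b*b*c=a*b*c$ for all $a,b,c\in X$. Then the zeroth lbo homology group is $H_0(X)=\mathbb{Z}X/\!\sim$, the free abelian group on the equivalence classes of the equivalence relation $\sim$ on $X$ generated by $a\sim b$ whenever there exist $x,y\in X$ with $a=x*y*x$ and $b=y*x*y$. (2) Let $(X,* )$ be a proto unital shelf or an idempotent semi-group. Then $H_0(X)=\mathbb{Z}X/\!\approx$, where $\approx$ is the equivalence relation on $X$ generated by $a\approx b$ whenever there exist $x,y\in X$ with $a=x*y$ and $b=y*x$. In particular, if $(X,* )$ is commutative, $H_0(X)=\mathbb{Z}X$.
   Context: For a semi-group $(X,* )$ satisfying $a*b*b*c=a*b*c$ (this includes associative shelves, proto unital shelves and idempotent semi-groups), the lbo chain complex has $C_n=\mathbb{Z}X^{n+1}$ ($n\ge0$) and $\partial_n=\sum_{i=0}^n(-1)^id_i$, where $d_0(x_0,\dots,x_n)=(x_0*x_1,x_2,\dots,x_{n-1},x_n*x_0)$, $d_n(x_0,\dots,x_n)=(x_n*x_0,x_1,\dots,x_{n-2},x_{n-1}*x_n)$, and for $0<i<n$, $d_i(x_0,\dots,x_n)=(x_0,\dots,x_{i-1}*x_i,x_i*x_{i+1},\dots,x_n)$; in particular $\partial_1(x_0,x_1)=x_0*x_1*x_0-x_1*x_0*x_1\in\mathbb{Z}X$. The lbo homology $H_n(X)$ is the homology of this complex, so $H_0(X)=\mathbb{Z}X/\operatorname{im}\partial_1$. A shelf is a set with operation satisfying $(a*b)*c=(a*c)*(b*c)$;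 a proto unital shelf is a shelf with $a*b=b*(a*b)$ and $a*b=(a*b)*b$ for all $a,b$ (these are associative). An idempotent semi-group is an associative magma with $a*a=a$ for all $a$. *)

From HB Require Import structures.
From mathcomp Require Import all_boot all_order all_algebra.
From mathcomp Require Import freeg.
From Stdlib Require Import Relations.Relation_Operators.

Set Implicit Arguments.
Unset Strict Implicit.
Unset Printing Implicit Defensive.

Import GRing.Theory.
Local Open Scope ring_scope.

Notation ZX X := {freeg X / int}.

Definition gen (X : choiceType) (x : X) : ZX X := Freeg [:: (1%R, x)].

Section LBO.
Context (X : choiceType) (op : X -> X -> X).
Local Notation "a * b" := (op a b).

(* lbo boundary d_1 : C_1 = Z X^2 -> C_0 = Z X on generators:
   d_1(x0, x1) = x0*x1*x0 - x1*x0*x1 (products bracketed to the left). *)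
Definition lbo_d1 (x0 x1 : X) : ZX X := gen (x0 * x1 * x0) - gen (x1 * x0 * x1).

Definition in_im_d1 (z : ZX X) : Prop :=
  exists s : seq (int * (X * X)),
    z = \sum_(t <- s) (t.1 *: lbo_d1 t.2.1 t.2.2).

(* H_0(X) = Z X / im d_1 "is" the free abelian group on the classes of the
   equivalence relation generated by R: for every model T of the quotient
   set X / ~ (a type T with a surjection pi : X -> T whose fibres are exactly
   the ~-classes), the canonical map Z X -> Z T induced by pi is surjective
   and its kernel is exactly im d_1; hence it induces an isomorphism
   H_0(X) = Z X / im d_1 ~= Z[X/~]. *)
Definition H0_is_free_on_classes (R : X -> X -> Prop) : Prop :=
  forall (T : choiceType) (pi : X -> T),
    (forall t : T, exists x : X, pi x = t) ->
    (forall a b : X, pi a = pi b <-> clos_refl_sym_trans X R a b) ->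
    let q : ZX X -> ZX T := fglift (fun x => gen (pi x)) in
    (forall w : ZX T, exists z : ZX X, q z = w) /\
    (forall z : ZX X, q z = 0 <-> in_im_d1 z).

Definition rel_xyx (a b : X) : Prop :=
  exists x y : X, a = x * y * x /\ b = y * x * y.

Definition rel_xy (a b : X) : Prop :=
  exists x y : X, a = x * y /\ b = y * x.

Definition is_semigroup : Prop := associative op.

Definition is_shelf : Prop :=
  forall a b c : X, (a * b) * c = (a * c) * (b * c).

Definition is_proto_unital_shelf : Prop :=
  is_shelf /\ (forall a b : X, a * b = b * (a * b)) /\
  (forall a b : X, a * b = (a * b) * b).

Definition is_idempotent_semigroup : Prop :=
  is_semigroup /\ (forall a : X, a * a = a).

End LBO.

(* H_0(X) = Z X / im d_1, and im d_1 is spanned by the differences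
   x*y*x - y*x*y, i.e. by a - b for the generating pairs of ~.  For any
   relation R on a set K and the quotient map pi : K -> K/R, the induced map
   Z K -> Z[K/R] is onto with kernel spanned by {a - b | R a b}: if s is a
   section of pi, then z - s(pi z) is a combination of differences
   x - s(pi x) of R-equivalent elements.  For (2), in a proto unital shelf
   x*y*x = y*x, so ~ and ≈ have the same generating pairs, while in an
   idempotent semigroup each generating relation lies in the closure of the
   other; a commutative operation makes ≈ trivial. *)

From HB Require Import structures.
From mathcomp Require Import all_boot all_order all_algebra.
From mathcomp Require Import freeg.
From Stdlib Require Import Relations.Relation_Operators.

Set Implicit Arguments.
Unset Strict Implicit.

Import GRing.Theory.
Local Open Scope ring_scope.

Local Notation crst := clos_refl_sym_trans.

Section FreegLift.
Variables (K : choiceType) (M : lmodType int) (f : K -> M).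

HB.instance Definition _ :=
  GRing.isZmodMorphism.Build (ZX K) M (fglift f) (lift_is_additive f).

Lemma fglift0 : fglift f 0 = 0. Proof. exact: raddf0. Qed.
Lemma fgliftD : {morph fglift f : a b / a + b}. Proof. exact: raddfD. Qed.
Lemma fgliftB : {morph fglift f : a b / a - b}. Proof. exact: raddfB. Qed.

Lemma fgliftZ (k : int) (z : ZX K) : fglift f (k *: z) = k *: fglift f z.
Proof. by rewrite -[k]intz !scaler_int raddfMz. Qed.

Lemma fglift_gen (x : K) : fglift f (gen x) = f x.
Proof. by rewrite liftU scale1r. Qed.

End FreegLift.

Lemma freegU_gen (K : choiceType) (k : int) (x : K) : << k *g x >> = k *: gen x.
Proof. by apply/eqP/freeg_eqP => y; rewrite coeffZ !coeffU mul1r. Qed.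

Lemma eq_fglift (K : choiceType) (M : lmodType int) (f g : K -> M) :
  f =1 g -> fglift f =1 fglift g.
Proof.
move=> eq_fg; elim/freeg_ind_dom0 => [|k x z _ _ IHz]; first by rewrite !fglift0.
by rewrite !fgliftD !liftU eq_fg IHz.
Qed.

Lemma fglift_genK (K : choiceType) (z : ZX K) : fglift (@gen K) z = z.
Proof.
elim/freeg_ind_dom0: z => [|k x z _ _ IHz]; first exact: fglift0.
by rewrite fgliftD liftU IHz freegU_gen.
Qed.

Lemma fglift_comp (K T : choiceType) (M : lmodType int) (g : T -> M) (f : K -> T)
    (z : ZX K) :
  fglift g (fglift (fun x => gen (f x)) z) = fglift (fun x => g (f x)) z.
Proof.
elim/freeg_ind_dom0: z => [|k x z _ _ IHz]; first by rewrite !fglift0.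
by rewrite !fgliftD !liftU IHz fgliftZ fglift_gen.
Qed.

Lemma crst_sub (K : Type) (R1 R2 : K -> K -> Prop) :
  (forall a b, R1 a b -> crst K R2 a b) ->
  forall a b, crst K R1 a b -> crst K R2 a b.
Proof.
move=> sub12 a b; elim=> {a b} [a b /sub12 //| a | a b _ | a b c _ IHab _ IHbc].
- exact: rst_refl.
- exact: rst_sym.
- exact: rst_trans IHab IHbc.
Qed.

Section RelSpan.
Variables (K : choiceType) (R : K -> K -> Prop).

Inductive rel_span : ZX K -> Prop :=
| rel_span0 : rel_span 0
| rel_span_cons k a b z :
    R a b -> rel_span z -> rel_span (k *: (gen a - gen b) + z).

Lemma rel_spanD z1 z2 : rel_span z1 -> rel_span z2 -> rel_span (z1 + z2).
Proof.
move=> + span_z2; elim=> [|k a b z Rab _ IHz]; first by rewrite add0r.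
by rewrite -addrA; exact: rel_span_cons.
Qed.

Lemma rel_spanZ k z : rel_span z -> rel_span (k *: z).
Proof.
elim=> [|l a b w Rab _ IHw]; first by rewrite scaler0; exact: rel_span0.
by rewrite scalerDr scalerA; exact: rel_span_cons.
Qed.

Lemma rel_span_crst a b : crst K R a b -> rel_span (gen a - gen b).
Proof.
elim=> {a b} [a b Rab | a | a b _ IHab | a b c _ IHab _ IHbc].
- by rewrite -[_ - _]addr0 -[_ - _]scale1r; exact: rel_span_cons rel_span0.
- by rewrite subrr; exact: rel_span0.
- by rewrite -opprB -scaleN1r; exact: rel_spanZ.
- by rewrite -[gen a](subrK (gen b)) -addrA; exact: rel_spanD.
Qed.

Lemma rel_span_fgliftB (f g : K -> ZX K) z :
  (forall x, rel_span (f x - g x)) -> rel_span (fglift f z - fglift g z).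
Proof.
move=> span_fg; elim/freeg_ind_dom0: z => [|k x z _ _ IHz].
  by rewrite !fglift0 subrr; exact: rel_span0.
rewrite !fgliftD !liftU opprD addrACA -scalerBr.
by apply: rel_spanD IHz; apply: rel_spanZ.
Qed.

End RelSpan.

Section FreegQuotient.
Variables (K T : choiceType) (R : K -> K -> Prop) (pi : K -> T) (s : T -> K).
Hypotheses (pi_fibres : forall a b, pi a = pi b <-> crst K R a b) (piK : cancel s pi).

Local Notation q := (fglift (fun x => gen (pi x))).
Local Notation r := (fglift (fun t => gen (s t))).

Lemma freeg_quotient_section w : q (r w) = w.
Proof.
rewrite fglift_comp -[RHS]fglift_genK.
by apply: eq_fglift => t; rewrite piK.
Qed.

Lemma freeg_quotient_kerE z : q z = 0 <-> rel_span R z.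
Proof.
split=> [qz0 | ].
  have -> : z = z - r (q z) by rewrite qz0 fglift0 subr0.
  rewrite -{1}[z]fglift_genK fglift_comp.
  apply: rel_span_fgliftB => x; apply: rel_span_crst.
  by apply/pi_fibres; rewrite piK.
elim=> [|k a b w Rab _ IHw]; first exact: fglift0.
rewrite fgliftD fgliftZ fgliftB !fglift_gen IHw.
by rewrite (pi_fibres a b).2 ?subrr ?scaler0 ?addr0 //; exact: rst_step.
Qed.

End FreegQuotient.

Section H0.
Variables (X : choiceType) (op : X -> X -> X).

Lemma in_im_d1_span z : in_im_d1 op z <-> rel_span (rel_xyx op) z.
Proof.
split=> [[s ->] | ].
  elim: s => [|[k [x y]] s IHs]; first by rewrite big_nil; exact: rel_span0.
  by rewrite big_cons; apply: rel_span_cons => //; exists x, y.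
elim=> [|k a b w [x [y [-> ->]]] _ [s ->]]; first by exists [::]; rewrite big_nil.
by exists ((k, (x, y)) :: s); rewrite big_cons.
Qed.

Lemma H0_free_of_span R :
  (forall z, in_im_d1 op z <-> rel_span R z) -> H0_is_free_on_classes op R.
Proof.
move=> im_d1E T pi pi_surj pi_fibres q.
have pi_surjb t : exists x, pi x == t by have [x <-] := pi_surj t; exists x.
pose s t := xchoose (pi_surjb t).
have piK : cancel s pi by move=> t; exact/eqP/(xchooseP (pi_surjb t)).
split=> [w | z].
  by exists (fglift (fun t => gen (s t)) w); exact: freeg_quotient_section.
exact: iff_trans (freeg_quotient_kerE pi_fibres piK z) (iff_sym (im_d1E z)).
Qed.

Lemma H0_free_xyx : H0_is_free_on_classes op (rel_xyx op).
Proof. exact: H0_free_of_span in_im_d1_span. Qed.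

Lemma H0_free_crst_eq R1 R2 :
  (forall a b, crst X R1 a b <-> crst X R2 a b) ->
  H0_is_free_on_classes op R1 -> H0_is_free_on_classes op R2.
Proof.
move=> crstE H0R1 T pi pi_surj pi_fibres.
apply: H0R1 => // a b; exact: iff_trans (pi_fibres a b) (iff_sym (crstE a b)).
Qed.

Lemma im_d1_eq0_discrete R :
  (forall a b, R a b -> a = b) -> H0_is_free_on_classes op R ->
  forall z, in_im_d1 op z -> z = 0.
Proof.
move=> R_eq H0R z im_z.
have id_fibres a b : a = b <-> crst X R a b.
  split=> [-> | ]; first exact: rst_refl.
  by elim=> [a' b' /R_eq | a' | a' b' _ -> | a' b' c' _ -> _ ->].
have [_ kerE] := H0R X id (fun t => ex_intro _ t erefl) id_fibres.
by rewrite -[z]fglift_genK; apply/kerE.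
Qed.

End H0.

Section Structures.
Variables (X : choiceType) (op : X -> X -> X).
Local Notation "a * b" := (op a b).

Section ProtoUnitalShelf.
Hypothesis pus : is_proto_unital_shelf op.

Lemma proto_unital_shelf_assoc : associative op.
Proof.
have [selfdistr [left_absorb right_absorb]] := pus.
move=> a b c; rewrite selfdistr (selfdistr a c (b * c)).
by rewrite -left_absorb -right_absorb.
Qed.

Lemma proto_unital_shelf_xyx x y : x * y * x = y * x.
Proof.
by have [_ [left_absorb _]] := pus; rewrite -proto_unital_shelf_assoc -left_absorb.
Qed.

Lemma proto_unital_shelf_rel_xyx a b : rel_xyx op a b <-> rel_xy op a b.
Proof.
by split=> -[x [y [-> ->]]]; exists y, x; rewrite !proto_unital_shelf_xyx.
Qed.

End ProtoUnitalShelf.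

Section IdempotentSemigroup.
Hypothesis isg : is_idempotent_semigroup op.

Lemma idempotent_semigroup_mulKx x y : x * (x * y) = x * y.
Proof. by have [mulA mulxx] := isg; rewrite mulA mulxx. Qed.

Lemma idempotent_semigroup_rel_xyx a b :
  rel_xyx op a b -> crst X (rel_xy op) a b.
Proof.
case=> x [y [-> ->]].
apply: (rst_trans _ _ _ (x * (x * y))); first by apply: rst_step; exists (x * y), x.
apply: (rst_trans _ _ _ (y * (y * x))); last by apply: rst_step; exists y, (y * x).
by rewrite !idempotent_semigroup_mulKx; apply: rst_step; exists x, y.
Qed.

Lemma idempotent_semigroup_rel_xy a b : rel_xy op a b -> rel_xyx op a b.
Proof.
have [mulA mulxx] := isg.
have xy_expand x y : x * y = x * y * (y * x) * (x * y).
  by rewrite -!mulA !idempotent_semigroup_mulKx mulA mulxx.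
by case=> x [y [-> ->]]; exists (x * y), (y * x); rewrite -!xy_expand.
Qed.

End IdempotentSemigroup.

End Structures.

Theorem proposition2p2 (X : choiceType) (op : X -> X -> X) :
  (* (1) *)
  (is_semigroup op ->
   (forall a b c : X, op (op (op a b) b) c = op (op a b) c) ->
   H0_is_free_on_classes op (rel_xyx op)) /\
  (* (2) *)
  (is_proto_unital_shelf op \/ is_idempotent_semigroup op ->
   H0_is_free_on_classes op (rel_xy op) /\
   (* in particular, if commutative, H_0(X) = Z X, i.e. im d_1 = 0 *)
   (commutative op -> forall z : ZX X, in_im_d1 op z -> z = 0)).
Proof.
(* Only d_1 enters H_0; the hypotheses of (1) are what make the lbo complex a
   chain complex. *)
split=> [_ _ | structX]; first exact: H0_free_xyx.
have crst_xyx_xy a b : crst X (rel_xyx op) a b <-> crst X (rel_xy op) a b.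
  case: structX => [pus | isg].
    by split; apply: crst_sub => {}a {}b /(proto_unital_shelf_rel_xyx pus);
      exact: rst_step.
  split; apply: crst_sub => {}a {}b; first exact: idempotent_semigroup_rel_xyx.
  by move/(idempotent_semigroup_rel_xy isg); exact: rst_step.
have H0_xy := H0_free_crst_eq crst_xyx_xy (H0_free_xyx (op := op)).
split=> // opC; apply: im_d1_eq0_discrete H0_xy.
by move=> a b [x [y [-> ->]]]; exact: opC.
Qed.
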